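(* Let $M,N$ be weights of $\mathbb{R}^m,\mathbb{R}^n$, let $A\in\mathbb{R}^{m\times n}$ with $MA=AN$, and let $K\subseteq\mathbb{R}^n$ be a closed cone. Then $$(A^{[\dagger]})^{[*]}\circ I\circ K^{[*]}\subseteq A\circ I\circ K+\mathcal{N}\big((A\circ I)^{[*]}\big)\iff (A^{[*]}\circ A)^{[\dagger]}\circ K^{[*]}\subseteq K+\mathcal{N}(A\circ I).$$
   Context: A weight is a real symmetric matrix $W$ with $W^2=I$. $\mathbb{R}^m$ and $\mathbb{R}^n$ carry weights $M\in\mathbb{R}^{m\times m}$ and $N\in\mathbb{R}^{n\times n}$, respectively. The indefinite inner product on the space with weight $W$ is $[x,y]=\langle x,Wy\rangle$. Indefinite matrix product: if $B$ has $p$ columns and $C$ has $p$ rows (or is a vector in $\mathbb{R}^p$), $p\in\{m,n\}$, and $W$ is the weight of $\mathbb{R}^p$, then $B\circ C:=BWC$. $I$ denotes an identity matrix of the appropriate size; e.g. $A^{[*]}\circ A=A^{[*]}MA$. Indefinite adjoint of $B\in\mathbb{R}^{p\times q}$: $B^{[*]}:=W_qB^TW_p$, where $W_p,W_q$ are the weights of $\mathbb{R}^p,\mathbb{R}^q$. Indefinite Moore–Penrose inverse: for $B\in\mathbb{R}^{p\times q}$, $B^{[\dagger]}$ is the unique $X\in\mathbb{R}^{q\times p}$ such that - $B\circ X\circ B=B$, - $X\circ B\circ X=X$, - $(B\circ X)^{[*]}=B\circ X$, - $(X\circ B)^{[*]}=X\circ B$. It equals $W_qB^\dagger W_p$. Range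 and null space: for a matrix $B$ with $q$ columns, $\mathcal{R}(B)=\{B\circ x:x\in\mathbb{R}^q\}$ and $\mathcal{N}(B)=\{x\in\mathbb{R}^q:B\circ x=0\}$. A cone is a nonempty set closed under addition and under multiplication by nonnegative scalars. For $S$ a subset of $\mathbb{R}^p$ with weight $W$, the dual is $S^{[*]}=\{x\in\mathbb{R}^p:[x,t]\ge0\ \forall t\in S\}$. For a matrix $B$ and a set $S$, $B\circ S=\{B\circ s:s\in S\}$. The sum of sets is the Minkowski sum. *)

From HB Require Import structures.
From Stdlib Require Import Reals ClassicalEpsilon FunctionalExtensionality.
From mathcomp Require Import all_boot all_order all_algebra.

Set Implicit Arguments.
Unset Strict Implicit.
Unset Printing Implicit Defensive.

Definition Req_bool (x y : R) : bool := if Req_EM_T x y then true else false.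

Lemma Req_boolP : Equality.axiom Req_bool.
Proof. by move=> x y; rewrite /Req_bool; case: Req_EM_T => h; constructor. Qed.

HB.instance Definition _ := hasDecEq.Build R Req_boolP.

Definition R_find (P : pred R) (n : nat) : option R :=
  match excluded_middle_informative (exists x, P x) with
  | left h => Some (proj1_sig (constructive_indefinite_description _ h))
  | right _ => None
  end.

Lemma R_find_correct P n x : R_find P n = Some x -> P x.
Proof.
rewrite /R_find; case: excluded_middle_informative => // h [<-].
exact: (proj2_sig (constructive_indefinite_description _ h)).
Qed.

Lemma R_find_complete (P : pred R) : (exists x, P x) -> exists n, R_find P n.
Proof. by move=> h; exists 0%N; rewrite /R_find; case: excluded_middle_informative. Qed.

Lemma R_find_ext (P Q : pred R) : P =1 Q -> R_find P =1 R_find Q.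
Proof. by move=> /functional_extensionality ->. Qed.

HB.instance Definition _ := hasChoice.Build R R_find_correct R_find_complete R_find_ext.

Lemma R_addA : associative Rplus. Proof. by move=> x y z; rewrite Rplus_assoc. Qed.
Lemma R_addC : commutative Rplus. Proof. exact: Rplus_comm. Qed.
Lemma R_add0 : left_id R0 Rplus. Proof. exact: Rplus_0_l. Qed.
Lemma R_addN : left_inverse R0 Ropp Rplus. Proof. exact: Rplus_opp_l. Qed.

HB.instance Definition _ := GRing.isZmodule.Build R R_addA R_addC R_add0 R_addN.

Lemma R_mulA : associative Rmult. Proof. by move=> x y z; rewrite Rmult_assoc. Qed.
Lemma R_mulC : commutative Rmult. Proof. exact: Rmult_comm. Qed.
Lemma R_mul1 : left_id R1 Rmult. Proof. exact: Rmult_1_l. Qed.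
Lemma R_mulDl : left_distributive Rmult Rplus.
Proof. by move=> x y z; rewrite Rmult_plus_distr_r. Qed.
Lemma R_one_neq0 : R1 != R0.
Proof. by apply/negP => /eqP; apply: R1_neq_R0. Qed.

HB.instance Definition _ :=
  GRing.Zmodule_isComNzRing.Build R R_mulA R_mulC R_mul1 R_mulDl R_one_neq0.

Import GRing.Theory.
Local Open Scope ring_scope.

Definition is_weight (p : nat) (W : 'M[R]_p) : Prop :=
  W^T = W /\ W *m W = 1%:M.

(* Indefinite matrix product B o C := B W C, W the weight of R^p
   (p = number of columns of B = number of rows of C). *)
Definition iprod (k p q : nat) (W : 'M[R]_p) (B : 'M[R]_(k, p)) (C : 'M[R]_(p, q))
  : 'M[R]_(k, q) := B *m W *m C.

Definition iadj (p q : nat) (Wp : 'M[R]_p) (Wq : 'M[R]_q) (B : 'M[R]_(p, q))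
  : 'M[R]_(q, p) := Wq *m B^T *m Wp.

Definition is_imp_inverse (p q : nat) (Wp : 'M[R]_p) (Wq : 'M[R]_q)
  (B : 'M[R]_(p, q)) (X : 'M[R]_(q, p)) : Prop :=
  [/\ iprod Wp (iprod Wq B X) B = B,
      iprod Wq (iprod Wp X B) X = X,
      iadj Wp Wp (iprod Wq B X) = iprod Wq B X
    & iadj Wq Wq (iprod Wp X B) = iprod Wp X B].

Definition imp_inv (p q : nat) (Wp : 'M[R]_p) (Wq : 'M[R]_q) (B : 'M[R]_(p, q))
  : 'M[R]_(q, p) :=
  epsilon (inhabits 0) (is_imp_inverse Wp Wq B).

Definition vset (p : nat) := 'cV[R]_p -> Prop.

Definition subset_v (p : nat) (S T : vset p) : Prop := forall x, S x -> T x.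

Definition msum (p : nat) (S T : vset p) : vset p :=
  fun x => exists a b, S a /\ T b /\ x = a + b.

Definition iimage (k q : nat) (W : 'M[R]_q) (B : 'M[R]_(k, q)) (S : vset q) : vset k :=
  fun y => exists s, S s /\ y = iprod W B s.

Definition inull (k q : nat) (W : 'M[R]_q) (B : 'M[R]_(k, q)) : vset q :=
  fun x => iprod W B x = 0.

Definition iinner (p : nat) (W : 'M[R]_p) (x y : 'cV[R]_p) : R :=
  (x^T *m W *m y) 0 0.

Definition idual (p : nat) (W : 'M[R]_p) (S : vset p) : vset p :=
  fun x => forall t, S t -> Rle 0%R (iinner W x t).

Definition is_cone (p : nat) (K : vset p) : Prop :=
  (exists x, K x) /\
  (forall x y, K x -> K y -> K (x + y)) /\
  (forall (a : R) x, Rle 0%R a -> K x -> K (a *: x)).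

(* Topologically closed subset of R^p (any norm; here the sup norm). *)
Definition is_closed_set (p : nat) (K : vset p) : Prop :=
  forall x : 'cV[R]_p,
    (forall eps : R, Rlt 0%R eps ->
       exists y, K y /\ forall i : 'I_p, Rlt (Rabs (x i 0 - y i 0)) eps) ->
    K x.

From HB Require Import structures.
From Stdlib Require Import Reals Lra ClassicalEpsilon.
From mathcomp Require Import all_boot all_order all_algebra.

Set Implicit Arguments.
Unset Strict Implicit.
Unset Printing Implicit Defensive.

(* With P the ordinary Moore-Penrose inverse of A, the indefinite inverse is
   A^[dagger] = N P M, and the intertwining M A = A N gives N P = P M, so every
   weight cancels: the two inclusions become
     P^T S <= A K + N(A^T)   and   P P^T S <= K + N(A)      (S = K^[*]).
   These are equivalent for arbitrary sets S and K, since A P P^T = P^T and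
   P P^T A^T = P: from P^T s = A k + b with A^T b = 0 one gets P b = 0, hence
   P P^T s = P A k = k + (P A k - k) with P A k - k in N(A); conversely
   P P^T s = a + b with A b = 0 gives P^T s = A (P P^T s) = A a. *)

Import GRing.Theory.
Local Open Scope ring_scope.

Lemma R_mulVf (x : R) : x != 0 -> Rinv x * x = 1.
Proof. by move=> /eqP; exact: Rinv_l. Qed.

HB.instance Definition _ := GRing.ComNzRing_isField.Build R R_mulVf Rinv_0.

Lemma sum_sqr_eq0 (k : nat) (f : 'I_k -> R) :
  \sum_(j < k) f j * f j = 0 -> forall j, f j = 0.
Proof.
have sqr_ge0 (x : R) : Rle R0 (x * x) by exact: Rle_0_sqr.
move=> sum0 j; rewrite (bigD1 j) //= in sum0.
have rest_ge0 : Rle R0 (\sum_(i < k | i != j) f i * f i).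
  apply: big_ind => [|x y|i _]; [exact: Rle_refl | exact: Rplus_le_le_0_compat | exact: sqr_ge0].
have fj2 : Rmult (f j) (f j) = R0.
  set S := \sum_(i < k | i != j) _ in rest_ge0 sum0.
  change (Rplus (f j * f j) S = R0) in sum0.
  have := sqr_ge0 (f j); lra.
by case: (Rmult_integral _ _ fj2).
Qed.

Lemma trmx_mul_rV_eq0 (p : nat) (w : 'rV[R]_p) : w *m w^T = 0 -> w = 0.
Proof.
move=> /(congr1 (fun X : 'M[R]_1 => X 0 0)); rewrite !mxE => ww0.
apply/rowP => j; rewrite mxE; move: j; apply: sum_sqr_eq0.
by rewrite -[in RHS]ww0; apply: eq_bigr => i _; rewrite mxE.
Qed.

Lemma row_free_gram_unit (p r : nat) (F : 'M[R]_(p, r)) :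
  row_free F -> F *m F^T \in unitmx.
Proof.
move=> freeF; rewrite -row_free_unit -kermx_eq0.
apply/rowV0P => u /sub_kermxP uFF0.
have uF0 : (u *m F) *m (u *m F)^T = 0.
  by rewrite trmx_mul !mulmxA -(mulmxA u) uFF0 mul0mx.
by apply/eqP; rewrite -(mulmx_free_eq0 _ freeF) (trmx_mul_rV_eq0 uF0).
Qed.

Definition is_mp_inverse (p q : nat) (B : 'M[R]_(p, q)) (X : 'M[R]_(q, p)) : Prop :=
  [/\ B *m X *m B = B, X *m B *m X = X, (B *m X)^T = B *m X & (X *m B)^T = X *m B].

Lemma mp_inverse_uniq (p q : nat) (B : 'M[R]_(p, q)) (X Y : 'M[R]_(q, p)) :
  is_mp_inverse B X -> is_mp_inverse B Y -> X = Y.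
Proof.
move=> [X1 X2 X3 X4] [Y1 Y2 Y3 Y4].
have XB_YB : X *m B = Y *m B.
  have -> : X *m B = (X *m B) *m (Y *m B) by rewrite -{1}Y1 !mulmxA.
  by rewrite -X4 -Y4 -trmx_mul -!mulmxA (mulmxA B X B) X1 Y4.
have BX_BY : B *m X = B *m Y.
  have -> : B *m X = (B *m Y) *m (B *m X) by rewrite -{1}Y1 -!mulmxA.
  by rewrite -X3 -Y3 -trmx_mul !mulmxA X1 Y3.
by rewrite -X2 -mulmxA BX_BY mulmxA XB_YB Y2.
Qed.

Lemma mp_inverse_full_rank_factor (p q r : nat) (F : 'M[R]_(p, r)) (G : 'M[R]_(r, q)) :
  row_free F^T -> row_free G ->
  is_mp_inverse (F *m G) (G^T *m invmx (G *m G^T) *m invmx (F^T *m F) *m F^T).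
Proof.
move=> freeFT freeG.
have unitGG : G *m G^T \in unitmx by exact: row_free_gram_unit.
have unitFF : F^T *m F \in unitmx by rewrite -{2}(trmxK F); exact: row_free_gram_unit.
set iG := invmx (G *m G^T); set iF := invmx (F^T *m F).
have iG_sym : iG^T = iG by rewrite /iG trmx_inv trmx_mul trmxK.
have iF_sym : iF^T = iF by rewrite /iF trmx_inv trmx_mul trmxK.
have BX : F *m G *m (G^T *m iG *m iF *m F^T) = F *m iF *m F^T.
  by rewrite !mulmxA -(mulmxA F G G^T) (mulmxK unitGG).
have XB : G^T *m iG *m iF *m F^T *m (F *m G) = G^T *m iG *m G.
  by rewrite !mulmxA -(mulmxA _ F^T F) (mulmxKV unitFF).
split.
- by rewrite BX !mulmxA -(mulmxA _ F^T F) (mulmxKV unitFF).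
- by rewrite XB !mulmxA -(mulmxA _ G G^T) (mulmxKV unitGG).
- by rewrite BX !trmx_mul trmxK iF_sym mulmxA.
- by rewrite XB !trmx_mul trmxK iG_sym mulmxA.
Qed.

Lemma mp_inverse_exists (p q : nat) (B : 'M[R]_(p, q)) :
  exists X, is_mp_inverse B X.
Proof.
rewrite -(mulmx_base B); eexists; apply: mp_inverse_full_rank_factor.
  by rewrite /row_free mxrank_tr; exact: col_base_full.
exact: row_base_free.
Qed.

Section Weight.
Variables (p : nat) (W : 'M[R]_p).
Hypothesis weightW : is_weight W.

Lemma weight_sym : W^T = W. Proof. by case: weightW. Qed.

Lemma weight_sqr : W *m W = 1%:M. Proof. by case: weightW. Qed.

Lemma mulmxWK (k : nat) (X : 'M[R]_(k, p)) : X *m W *m W = X.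
Proof. by rewrite -mulmxA weight_sqr mulmx1. Qed.

Lemma mulWKmx (k : nat) (X : 'M[R]_(p, k)) : W *m (W *m X) = X.
Proof. by rewrite mulmxA weight_sqr mul1mx. Qed.

Lemma eq_mulmxW (k : nat) (X Y : 'M[R]_(k, p)) : X *m W = Y *m W <-> X = Y.
Proof. by split=> [XY|-> //]; rewrite -[X]mulmxWK XY mulmxWK. Qed.

Lemma eq_mulWmx (k : nat) (X Y : 'M[R]_(p, k)) : W *m X = W *m Y <-> X = Y.
Proof. by split=> [XY|-> //]; rewrite -[X]mulWKmx XY mulWKmx. Qed.

End Weight.

Lemma weight1 (k : nat) : is_weight (1%:M : 'M[R]_k).
Proof. by split; [rewrite trmx1 | rewrite mulmx1]. Qed.

Lemma weight_conjK (k l : nat) (X : 'M[R]_(k, l)) (U : 'M[R]_k) (V : 'M[R]_l) :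
  is_weight U -> is_weight V -> U *m (U *m X *m V) *m V = X.
Proof. by move=> weightU weightV; rewrite !mulmxA mulmxWK // weight_sqr // mul1mx. Qed.

Section IndefiniteInverse.
Variables (p q : nat) (Wp : 'M[R]_p) (Wq : 'M[R]_q).
Hypotheses (weightWp : is_weight Wp) (weightWq : is_weight Wq).

Lemma is_imp_inverseE (B : 'M[R]_(p, q)) (X : 'M[R]_(q, p)) :
  is_imp_inverse Wp Wq B X <-> is_mp_inverse B (Wq *m X *m Wp).
Proof.
have WpT := weight_sym weightWp; have WqT := weight_sym weightWq.
have penrose1 : B *m Wq *m X *m Wp *m B = B <-> B *m (Wq *m X *m Wp) *m B = B.
  by rewrite !mulmxA.
have penrose2 : X *m Wp *m B *m Wq *m X = X <->
                  Wq *m X *m Wp *m B *m (Wq *m X *m Wp) = Wq *m X *m Wp.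
  by rewrite -(eq_mulWmx weightWq) -(eq_mulmxW weightWp) !mulmxA.
have penrose3 : Wp *m (B *m Wq *m X)^T *m Wp = B *m Wq *m X <->
                  (B *m (Wq *m X *m Wp))^T = B *m (Wq *m X *m Wp).
  by rewrite -(eq_mulmxW weightWp) !trmx_mul WpT WqT !mulmxA mulmxWK.
have penrose4 : Wq *m (X *m Wp *m B)^T *m Wq = X *m Wp *m B <->
                  (Wq *m X *m Wp *m B)^T = Wq *m X *m Wp *m B.
  by rewrite -(eq_mulWmx weightWq) !trmx_mul WpT WqT !mulmxA (weight_sqr weightWq) mul1mx.
rewrite /is_imp_inverse /is_mp_inverse /iprod /iadj.
by split=> -[h1 h2 h3 h4]; split;
  by [apply/penrose1 | apply/penrose2 | apply/penrose3 | apply/penrose4].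
Qed.

Lemma imp_invE (B : 'M[R]_(p, q)) (P : 'M[R]_(q, p)) :
  is_mp_inverse B P -> imp_inv Wp Wq B = Wq *m P *m Wp.
Proof.
move=> mpP.
have imp_invP : is_imp_inverse Wp Wq B (imp_inv Wp Wq B).
  apply: epsilon_spec; exists (Wq *m P *m Wp).
  by apply/is_imp_inverseE; rewrite weight_conjK.
have /mp_inverse_uniq /(_ mpP) <- := proj1 (is_imp_inverseE _ _) imp_invP.
by rewrite weight_conjK.
Qed.

Lemma iadj_conj (X : 'M[R]_(p, q)) : iadj Wp Wq (Wp *m X *m Wq) = X^T.
Proof.
rewrite /iadj !trmx_mul (weight_sym weightWp) (weight_sym weightWq) !mulmxA.
by rewrite mulmxWK // weight_sqr // mul1mx.
Qed.

End IndefiniteInverse.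

Lemma iprod1_mulW (k p : nat) (W : 'M[R]_p) (Z : 'M[R]_(k, p)) :
  is_weight W -> iprod W Z 1%:M *m W = Z.
Proof. by move=> weightW; rewrite /iprod mulmx1 mulmxWK. Qed.

Lemma mp_inverse_conj (p q : nat) (U : 'M[R]_p) (V : 'M[R]_q) B P :
  is_weight U -> is_weight V -> is_mp_inverse B P ->
  is_mp_inverse (U *m B *m V) (V *m P *m U).
Proof.
move=> weightU weightV [P1 P2 P3 P4].
have UT := weight_sym weightU; have VT := weight_sym weightV.
split.
- by rewrite !mulmxA !mulmxWK // -(mulmxA U B P) -(mulmxA U (B *m P) B) P1.
- by rewrite !mulmxA !mulmxWK // -(mulmxA V P B) -(mulmxA V (P *m B) P) P2.
- by rewrite !mulmxA mulmxWK // -(mulmxA U B P) 2!trmx_mul P3 UT !mulmxA.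
- by rewrite !mulmxA mulmxWK // -(mulmxA V P B) 2!trmx_mul P4 VT !mulmxA.
Qed.


Definition mimage (k q : nat) (B : 'M[R]_(k, q)) (S : vset q) : vset k :=
  fun y => exists s, S s /\ y = B *m s.

Definition mker (k q : nat) (B : 'M[R]_(k, q)) : vset q := fun x => B *m x = 0.

Lemma iimageE (k q : nat) (W : 'M[R]_q) (B : 'M[R]_(k, q)) (S : vset q) :
  iimage W B S = mimage (B *m W) S.
Proof. by []. Qed.

Lemma inullE (k q : nat) (W : 'M[R]_q) (B : 'M[R]_(k, q)) : inull W B = mker (B *m W).
Proof. by []. Qed.

Section PseudoInverse.
Variables (m n : nat) (A : 'M[R]_(m, n)) (P : 'M[R]_(n, m)).
Hypothesis mpP : is_mp_inverse A P.

Lemma mulmx_pinv_gram : A *m (P *m P^T) = P^T.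
Proof.
by case: mpP => _ P2 P3 _; rewrite mulmxA -P3 -trmx_mul mulmxA P2.
Qed.

Lemma mulmx_pinv_gram_tr : P *m P^T *m A^T = P.
Proof. by have := congr1 trmx mulmx_pinv_gram; rewrite !trmx_mul !trmxK. Qed.

Lemma pinv_gram_mulmx : P *m P^T *m (A^T *m A) = P *m A.
Proof. by rewrite mulmxA mulmx_pinv_gram_tr. Qed.

Lemma gram_mulmx_pinv : A^T *m A *m (P *m P^T) = P *m A.
Proof. by case: mpP => _ _ _ P4; rewrite -mulmxA mulmx_pinv_gram -trmx_mul P4. Qed.

Lemma mp_inverse_gram : is_mp_inverse (A^T *m A) (P *m P^T).
Proof.
case: mpP => P1 _ _ P4; split.
- by rewrite -mulmxA pinv_gram_mulmx -!mulmxA (mulmxA A P A) P1.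
- by rewrite pinv_gram_mulmx -mulmxA mulmx_pinv_gram.
- by rewrite gram_mulmx_pinv P4.
- by rewrite pinv_gram_mulmx P4.
Qed.

Lemma pinv_image_sub_equiv (S K : vset n) :
  subset_v (mimage P^T S) (msum (mimage A K) (mker A^T)) <->
  subset_v (mimage (P *m P^T) S) (msum K (mker A)).
Proof.
have APA : A *m P *m A = A by case: mpP.
split=> sub _ [s [Ss ->]].
- have [_ [b [[k [Kk ->]] [Atb0 e]]]] := sub _ (ex_intro _ s (conj Ss erefl)).
  have Pb0 : P *m b = 0 by rewrite -mulmx_pinv_gram_tr -mulmxA Atb0 mulmx0.
  have PPts : P *m P^T *m s = P *m A *m k.
    by rewrite -mulmxA e mulmxDr Pb0 addr0 mulmxA.
  exists k, (P *m A *m k - k); split=> //; split; last by rewrite PPts addrC subrK.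
  by rewrite /mker mulmxBr !mulmxA APA subrr.
- have [a [b [Ka [Ab0 e]]]] := sub _ (ex_intro _ s (conj Ss erefl)).
  exists (A *m a), 0; split; first by exists a.
  split; first by rewrite /mker mulmx0.
  by rewrite addr0 -mulmx_pinv_gram -mulmxA e mulmxDr Ab0 addr0.
Qed.

End PseudoInverse.

Section IntertwinedWeights.
Variables (m n : nat) (M : 'M[R]_m) (N : 'M[R]_n) (A : 'M[R]_(m, n)) (P : 'M[R]_(n, m)).
Hypotheses (weightM : is_weight M) (weightN : is_weight N) (MA_AN : M *m A = A *m N).
Hypothesis mpP : is_mp_inverse A P.

Lemma mp_inverse_intertwine : N *m P = P *m M.
Proof.
have NPM : N *m P *m M = P.
  apply: (mp_inverse_uniq _ mpP).
  by have := mp_inverse_conj weightM weightN mpP; rewrite MA_AN mulmxWK.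
by rewrite -[in RHS]NPM mulmxWK.
Qed.

Lemma pinv_gram_weight_conj : N *m (P *m P^T) *m N = P *m P^T.
Proof.
have -> : N *m (P *m P^T) *m N = N *m P *m (N *m P)^T.
  by rewrite trmx_mul (weight_sym weightN) !mulmxA.
by rewrite mp_inverse_intertwine trmx_mul (weight_sym weightM) mulmxA mulmxWK.
Qed.

End IntertwinedWeights.

Theorem lemma3p11 (m n : nat) (M : 'M[R]_m) (N : 'M[R]_n) (A : 'M[R]_(m, n))
  (hM : is_weight M) (hN : is_weight N) (hMA : M *m A = A *m N)
  (K : vset n) (hKcone : is_cone K) (hKclosed : is_closed_set K) :
  subset_v
    (iimage N (iprod N (iadj N M (imp_inv M N A)) (1%:M : 'M[R]_n)) (idual N K))
    (msum (iimage N (iprod N A (1%:M : 'M[R]_n)) K)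
          (inull M (iadj M N (iprod N A (1%:M : 'M[R]_n)))))
  <->
  subset_v
    (iimage N (imp_inv N N (iprod M (iadj M N A) A)) (idual N K))
    (msum K (inull N (iprod N A (1%:M : 'M[R]_n)))).
Proof.
have [P mpP] := mp_inverse_exists A.
have pinv_adj : iprod N (iadj N M (imp_inv M N A)) 1%:M *m N = P^T.
  by rewrite (imp_invE hM hN mpP) iadj_conj // iprod1_mulW.
have A_op : iprod N A 1%:M *m N = A by rewrite iprod1_mulW.
have adj_A : iadj M N (iprod N A 1%:M) *m M = A^T.
  by rewrite /iadj mulmxWK // /iprod mulmx1 trmx_mul (weight_sym hN) mulWKmx.
have pinv_gram : imp_inv N N (iprod M (iadj M N A) A) *m N = P *m P^T.
  have -> : iprod M (iadj M N A) A = N *m (A^T *m A) *m 1%:M.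
    by rewrite /iprod /iadj mulmx1 mulmxWK // mulmxA.
  rewrite (imp_invE hN hN (mp_inverse_conj hN (weight1 n) (mp_inverse_gram mpP))).
  by rewrite mulmxWK // mul1mx mulmxA (pinv_gram_weight_conj hM hN hMA mpP).
rewrite !iimageE !inullE pinv_adj A_op adj_A pinv_gram.
exact: (pinv_image_sub_equiv mpP (idual N K) K).
Qed.
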